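(* Let $r \le \min(M,N)$ be positive integers and let $\mathcal{P}=\mathcal{B}_\infty=\{\mathbf{x}\in\mathbb{R}^r \mid \|\mathbf{x}\|_\infty\le 1\}$. Let $\mathbf{H}_g\in\mathbb{R}^{M\times r}$ have full column rank, let $\mathbf{S}_g\in\mathbb{R}^{r\times N}$ have all of its columns in $\mathcal{P}$, and set $\mathbf{Y}=\mathbf{H}_g\mathbf{S}_g$. Suppose $\mathbf{S}_g$ is a sufficiently scattered factor corresponding to $\mathcal{P}$ (as defined in the context). Consider the Det-Max optimization problem $$\max_{\mathbf{H}\in\mathbb{R}^{M\times r},\ \mathbf{S}\in\mathbb{R}^{r\times N}} \det(\mathbf{S}\mathbf{S}^T)\quad\text{subject to}\quad \mathbf{Y}=\mathbf{H}\mathbf{S},\ \ \mathbf{S}_{:,j}\in\mathcal{P}\ \ (j=1,\dots,N).$$ Then every global optimum $(\mathbf{H}_*,\mathbf{S}_* )$ of this problem satisfies $$\mathbf{H}_*=\mathbf{H}_g\boldsymbol{\Pi}^T\mathbf{D},\qquad \mathbf{S}_*=\mathbf{D}\boldsymbol{\Pi}\mathbf{S}_g,$$ for some permutation matrix $\boldsymbol{\Pi}\in\mathbb{R}^{r\times r}$ and some invertible diagonal matrix $\mathbf{D}\in\mathbb{R}^{r\times r}$ with diagonal entries in $\{-1,+1\}$.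
   Context: $\mathbf{S}_{:,j}$ denotes the $j$-th column of $\mathbf{S}$; $\mathrm{conv}(\mathbf{S})$ is the convex hull of the columns of $\mathbf{S}$. For a convex polytope $\mathcal{P}\subset\mathbb{R}^r$ with nonempty interior, $\mathcal{E}_\mathcal{P}$ denotes its maximum volume inscribed ellipsoid (MVIE), i.e. the (unique) ellipsoid of maximal volume contained in $\mathcal{P}$, written $\mathcal{E}_\mathcal{P}=\{\mathbf{C}_\mathcal{P}\mathbf{u}+\mathbf{g}_\mathcal{P}\mid \|\mathbf{u}\|_2\le 1\}$ with $\mathbf{C}_\mathcal{P}\succeq 0$ and center $\mathbf{g}_\mathcal{P}$. For a set $C\subset\mathbb{R}^r$ and point $\mathbf{d}$, the polar of $C$ with respect to $\mathbf{d}$ is $C^{*,\mathbf{d}}=\{\mathbf{x}\in\mathbb{R}^r\mid \langle\mathbf{x},\mathbf{y}-\mathbf{d}\rangle\le 1\ \forall \mathbf{y}\in C\}$. $\mathrm{bd}(\cdot)$ denotes boundary and $\mathrm{ext}(\cdot)$ the set of extreme points (vertices). A matrix $\mathbf{S}\in\mathbb{R}^{r\times N}$ is called a sufficiently scattered factor corresponding to $\mathcal{P}$ if (i) $\mathcal{P}\supseteq\mathrm{conv}(\mathbf{S})\supset\mathcal{E}_\mathcal{P}$, and (ii) $\mathrm{conv}(\mathbf{S})^{*,\mathbf{g}_\mathcal{P}}\cap\mathrm{bd}(\mathcal{E}_\mathcal{P}^{*,\mathbf{g}_\mathcal{P}})=\mathrm{ext}(\mathcal{P}^{*,\mathbf{g}_\mathcal{P}})$.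 *)

From HB Require Import structures.
From mathcomp Require Import all_boot all_order all_algebra all_fingroup.
From mathcomp Require Import reals.
Set Implicit Arguments. Unset Strict Implicit. Unset Printing Implicit Defensive.
Import Order.TTheory GRing.Theory Num.Theory.
Local Open Scope ring_scope.

Section Defs.
Variable R : realType.
Variable r : nat.
Notation vec := 'cV[R]_r.

Definition subset (A B : vec -> Prop) := forall x, A x -> B x.

Definition dotv (x y : vec) : R := \sum_i x i 0 * y i 0.
Definition sqnorm (x : vec) : R := dotv x x.

Definition Binf : vec -> Prop := fun x => forall i, `|x i 0| <= 1.

Definition conv N (S : 'M[R]_(r, N)) : vec -> Prop :=
  fun x => exists lam : 'I_N -> R,
    (forall j, 0 <= lam j) /\ \sum_j lam j = 1 /\ x = \sum_j lam j *: col j S.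

Definition ellipsoid (C : 'M[R]_r) (g : vec) : vec -> Prop :=
  fun x => exists u : vec, sqnorm u <= 1 /\ x = C *m u + g.

Definition psd (C : 'M[R]_r) : Prop :=
  C^T = C /\ forall u : vec, 0 <= dotv u (C *m u).

(* (C, g) describes the maximum volume inscribed ellipsoid of P.  The volume
   of { C u + g | ||u||_2 <= 1 } with C psd equals det C times the volume of
   the Euclidean unit ball, so maximizing volume = maximizing det C. *)
Definition is_MVIE (P : vec -> Prop) (C : 'M[R]_r) (g : vec) : Prop :=
  psd C /\ subset (ellipsoid C g) P /\
  forall C' g', psd C' -> subset (ellipsoid C' g') P -> \det C' <= \det C.

Definition polar (A : vec -> Prop) (d : vec) : vec -> Prop :=
  fun x => forall y, A y -> dotv x (y - d) <= 1.

Definition bd (A : vec -> Prop) : vec -> Prop :=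
  fun x => forall e : R, 0 < e ->
    (exists y, A y /\ sqnorm (y - x) < e ^+ 2) /\
    (exists z, ~ A z /\ sqnorm (z - x) < e ^+ 2).

Definition ext (A : vec -> Prop) : vec -> Prop :=
  fun x => A x /\ forall y z (t : R), A y -> A z -> 0 < t < 1 ->
    x = t *: y + (1 - t) *: z -> y = z.

Definition suff_scattered N (S : 'M[R]_(r, N)) (P : vec -> Prop) : Prop :=
  exists C g, is_MVIE P C g /\
    subset (conv S) P /\ subset (ellipsoid C g) (conv S) /\
    (forall x, (polar (conv S) g x /\ bd (polar (ellipsoid C g) g) x)
               <-> ext (polar P g) x).
End Defs.

From Pilot Require Import Defs.
From HB Require Import structures.
From mathcomp Require Import all_boot all_order all_algebra all_fingroup.
From mathcomp Require Import reals.
From mathcomp Require Import ring lra.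
Set Implicit Arguments. Unset Strict Implicit. Unset Printing Implicit Defensive.
Import Order.TTheory GRing.Theory Num.Theory.
Local Open Scope ring_scope.

(* The maximum volume ellipsoid {C u + g} inscribed in the cube is the unit ball:
   inscription gives C_ii + |g_i| <= 1, and Hadamard's inequality
   det C <= prod_i C_ii (with det C >= 1, the ball being admissible) forces C = I
   and g = 0. Sufficient scattering therefore puts the unit ball inside conv(S_g),
   so S_g has full row rank and every feasible factorization is (H_g A^-1, A S_g)
   with A invertible. Optimality gives det(A)^2 >= 1, while each row a_i of A
   satisfies <a_i, y> <= 1 on conv(S_g), hence ||a_i||_2 <= 1; Hadamard's inequality
   for A A^T forces ||a_i||_2 = 1. Then a_i is on the boundary of the polar of the
   ball, so scattering puts it in the polar of the cube: ||a_i||_1 <= 1. A vector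
   with ||a||_1 <= 1 = ||a||_2 is a signed unit vector, so A is a signed
   permutation matrix. *)

Lemma qform_sym_block (R : comPzRingType) n (a t : R) (b : 'rV[R]_n) (K : 'M_n)
    (x : 'cV_n) :
  ((col_mx t%:M x)^T *m block_mx a%:M b b^T K *m col_mx t%:M x) 0 0 =
  t * a * t + 2 * t * (b *m x) 0 0 + (x^T *m K *m x) 0 0.
Proof.
rewrite tr_col_mx tr_scalar_mx mul_row_block mul_row_col !mulmxDl -trmx_mul.
rewrite !mul_scalar_mx !mul_mx_scalar -scalemxAl !mxE eqxx /=; ring.
Qed.

Lemma det_schur (F : fieldType) n (a : F) (b : 'rV[F]_n) (c : 'cV_n) (K : 'M_n) :
  a != 0 -> \det (block_mx a%:M b c K) = a * \det (K - a^-1 *: (c *m b)).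
Proof.
move=> a_neq0.
have -> : block_mx a%:M b c K =
    block_mx 1%:M 0 (a^-1 *: c) 1%:M *m block_mx a%:M b 0 (K - a^-1 *: (c *m b)).
  rewrite mulmx_block !mul1mx !mul0mx !addr0 mul_mx_scalar scalerA mulfV //.
  by rewrite scale1r -scalemxAl addrC subrK.
by rewrite det_mulmx det_lblock det_ublock !det1 !mul1r det_mx11 mxE eqxx.
Qed.

Section Hadamard.
Variable R : realFieldType.

Lemma psd_diag_ge0 n (G : 'M[R]_n) :
  (forall x : 'cV_n, 0 <= (x^T *m G *m x) 0 0) -> forall i, 0 <= G i i.
Proof.
by move=> Gpsd i; have := Gpsd (delta_mx i 0); rewrite trmx_delta -rowE -colE !mxE.
Qed.

Lemma sym_blockP n (G : 'M[R]_(1 + n)) : G^T = G ->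
  exists a b K, G = block_mx a%:M b b^T K /\ K^T = K.
Proof.
rewrite -[G]submxK tr_block_mx => /eq_block_mx[_ _ <- Ksym].
by exists (ulsubmx G 0 0), (ursubmx G), (drsubmx G); rewrite -mx11_scalar.
Qed.

Lemma psd_sym_block0 n (b : 'rV[R]_n) (K : 'M_n) :
  (forall y : 'cV_(1 + n), 0 <= (y^T *m block_mx 0%:M b b^T K *m y) 0 0) -> b = 0.
Proof.
move=> Gpsd; apply/rowP => j; rewrite mxE; apply/eqP/contraT => b_neq0.
(* With a zero pivot the form is affine in the first coordinate, with slope
   [2 b_j]; a nonzero slope makes it negative somewhere. *)
pose q := ((delta_mx j 0)^T *m K *m delta_mx j 0 : 'M_1) 0 0.
have := Gpsd (col_mx (- (q + 1) / (2 * b 0 j))%:M (delta_mx j 0)).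
rewrite qform_sym_block -/q -colE mxE mulr0 mul0r add0r.
have -> : 2 * (- (q + 1) / (2 * b 0 j)) * b 0 j = - (q + 1) by field.
lra.
Qed.

Lemma psd_schur n (a : R) (b : 'rV[R]_n) (K : 'M_n) : a != 0 ->
  (forall y : 'cV_(1 + n), 0 <= (y^T *m block_mx a%:M b b^T K *m y) 0 0) ->
  forall x : 'cV_n, 0 <= (x^T *m (K - a^-1 *: (b^T *m b)) *m x) 0 0.
Proof.
move=> a_neq0 Gpsd x.
have -> : (x^T *m (K - a^-1 *: (b^T *m b)) *m x) 0 0 =
          (x^T *m K *m x) 0 0 - a^-1 * ((b *m x) 0 0 * (b *m x) 0 0).
  rewrite mulmxBr mulmxBl -scalemxAr -scalemxAl.
  have -> : x^T *m (b^T *m b) *m x = (b *m x)^T *m (b *m x).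
    by rewrite trmx_mul !mulmxA.
  by rewrite [in LHS]mxE; congr (_ + _); rewrite !mxE big_ord1 !mxE.
set beta := (b *m x) 0 0; set q := (x^T *m K *m x) 0 0.
(* Completing the square: [- beta / a] minimizes the form in the first coordinate. *)
have := Gpsd (col_mx (- beta / a)%:M x); rewrite qform_sym_block -/beta -/q.
have -> : - beta / a * a * (- beta / a) + 2 * (- beta / a) * beta + q =
          q - a^-1 * (beta * beta) by field.
by [].
Qed.

Lemma hadamard n (G : 'M[R]_n) : G^T = G ->
  (forall x : 'cV_n, 0 <= (x^T *m G *m x) 0 0) -> 0 <= \det G <= \prod_i G i i.
Proof.
elim: n G => [|n IH]; first by move=> G; rewrite det_mx00 big_ord0 lexx ler01.
rewrite -[n.+1]/(1 + n)%N => G Gsym Gpsd.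
have [a [b [K [GE Ksym]]]] := sym_blockP Gsym.
have Gdiag i : 0 <= G i i := psd_diag_ge0 Gpsd i.
rewrite GE in Gpsd Gdiag *.
have a_ge0 : 0 <= a by have := Gdiag (lshift n (0 : 'I_1)); rewrite block_mxEul mxE.
have Kdiag_ge0 i : 0 <= K i i by have := Gdiag (rshift 1 i); rewrite block_mxEdr.
rewrite big_split_ord /= big_ord1 block_mxEul mxE mulr1n.
under eq_bigr do rewrite block_mxEdr.
have prodK_ge0 : 0 <= \prod_i K i i by apply: prodr_ge0.
have [a0 | a_neq0] := eqVneq a 0.
  rewrite a0 in Gpsd *; rewrite (psd_sym_block0 Gpsd) trmx0 det_lblock.
  by rewrite det_mx11 mxE mul0rn !mul0r lexx.
rewrite det_schur //; set S := K - _.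
have Spsd := psd_schur a_neq0 Gpsd.
have Ssym : S^T = S by rewrite /S linearB linearZ /= trmx_mul trmxK Ksym.
have /andP[detS_ge0 detS_le] := IH S Ssym Spsd.
rewrite mulr_ge0 //= ler_wpM2l // (le_trans detS_le) //.
apply: ler_prod => i _; rewrite psd_diag_ge0 //= /S !mxE big_ord1 !mxE.
by rewrite lerBlDr lerDl mulr_ge0 ?invr_ge0 // -expr2 sqr_ge0.
Qed.

Lemma gram_sym m n (A : 'M[R]_(m, n)) : (A *m A^T)^T = A *m A^T.
Proof. by rewrite trmx_mul trmxK. Qed.

Lemma gram_psd m n (A : 'M[R]_(m, n)) (x : 'cV_m) :
  0 <= (x^T *m (A *m A^T) *m x) 0 0.
Proof.
rewrite (_ : _ *m x = (A^T *m x)^T *m (A^T *m x)); last by rewrite trmx_mul trmxK !mulmxA.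
by rewrite mxE sumr_ge0 // => k _; rewrite mxE -expr2 sqr_ge0.
Qed.

Lemma gram_diag m n (A : 'M[R]_(m, n)) i : (A *m A^T) i i = \sum_j A i j ^+ 2.
Proof. by rewrite mxE; apply: eq_bigr => j _; rewrite mxE expr2. Qed.

Lemma det_gram_gt0 m n (A : 'M[R]_(m, n)) : row_free A -> 0 < \det (A *m A^T).
Proof.
move=> A_free; have /andP[detG_ge0 _] := hadamard (gram_sym A) (gram_psd A).
rewrite lt_def detG_ge0 andbT; apply/det0P => -[v v_neq0 vG0].
have vA0 : v *m A = 0.
  have sum0 : \sum_k (v *m A) 0 k ^+ 2 = 0.
    by rewrite -gram_diag trmx_mul !mulmxA -(mulmxA v) vG0 !mul0mx mxE.
  apply/rowP => k; apply/eqP; rewrite [X in _ == X]mxE -sqrf_eq0; apply/eqP.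
  by apply: (psumr_eq0P (P := fun=> true) _ sum0) => // j _; rewrite sqr_ge0.
by move/eqP: v_neq0; apply; apply: (row_free_inj A_free); rewrite vA0 mul0mx.
Qed.
End Hadamard.

Section RealSums.
Variable R : realDomainType.

Lemma prodr_ge1_eq1 n (F : 'I_n -> R) :
  (forall i, 0 <= F i <= 1) -> 1 <= \prod_i F i -> forall i, F i = 1.
Proof.
move=> F01 prod_ge1 i; have /andP[Fi_ge0 Fi_le1] := F01 i.
apply/le_anti; rewrite Fi_le1 (le_trans prod_ge1) // (bigD1 i) //=.
by rewrite ler_piMr ?prodr_ge0 ?prodr_ile1 // => j _; case/andP: (F01 j).
Qed.

Lemma sqr_sum_le1_eq0 n (a : 'I_n -> R) k :
  a k ^+ 2 = 1 -> \sum_j a j ^+ 2 <= 1 -> forall j, j != k -> a j = 0.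
Proof.
move=> ak1 le1 j jk; apply/eqP; rewrite -sqrf_eq0; apply/eqP.
apply: (psumr_eq0P (P := fun j => j != k) (F := fun j => a j ^+ 2)) jk.
  by move=> i _; rewrite sqr_ge0.
apply/le_anti; rewrite sumr_ge0 ?andbT => [|i _]; last exact: sqr_ge0.
by move: le1; rewrite (bigD1 k) //= ak1; lra.
Qed.

Lemma signed_unit_l1 n (a : 'I_n -> R) :
  \sum_j `|a j| <= 1 -> \sum_j a j ^+ 2 = 1 ->
  exists k, (a k = 1 \/ a k = -1) /\ forall j, j != k -> a j = 0.
Proof.
move=> l1 l2.
have a_le1 j : `|a j| <= 1.
  by apply: le_trans l1; rewrite (bigD1 j) //= lerDl sumr_ge0.
have sqr_norm j : a j ^+ 2 = `|a j|.
  have sq_le i : 0 <= `|a i| - a i ^+ 2.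
    by rewrite subr_ge0 -real_normK ?num_real // expr2 ler_piMl.
  apply/eqP; rewrite eq_sym -subr_eq0; apply/eqP.
  apply: (psumr_eq0P (P := fun=> true) (fun i _ => sq_le i)) => //.
  by apply/le_anti; rewrite sumr_ge0 // andbT sumrB l2 subr_le0.
have [k ak_neq0] : exists k, a k != 0.
  case: (pickP (fun j => a j != 0)) => [k ? | a0]; first by exists k.
  move: l2; rewrite big1 => [/esym/eqP|j _]; first by rewrite oner_eq0.
  by move/negbFE/eqP: (a0 j) => ->; rewrite expr0n.
have ak_norm : `|a k| = 1.
  apply: (mulfI (x := `|a k|)); first by rewrite normr_eq0.
  by rewrite mulr1 -expr2 real_normK ?num_real // sqr_norm.
exists k; split.
  by move: ak_norm; case: ger0P => _ ak; [left | right]; lra.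
by apply: (sqr_sum_le1_eq0 (k := k)); rewrite ?sqr_norm ?ak_norm ?l2.
Qed.
End RealSums.

Section Factorizations.
Variable F : fieldType.

Lemma factorization_unitmx m n k (Hg Hs : 'M[F]_(m, k)) (Sg Ss : 'M[F]_(k, n)) :
  row_full Hg -> row_free Sg -> Hg *m Sg = Hs *m Ss ->
  exists2 A, A \in unitmx & Ss = A *m Sg /\ Hs = Hg *m invmx A.
Proof.
case/row_fullP => L LHg; case/row_freeP => B SgB HS.
pose P := L *m Hs.
have SgP : Sg = P *m Ss by rewrite -mulmxA -HS mulmxA LHg mul1mx.
have P_unit : P \in unitmx.
  have PSsB : P *m (Ss *m B) = 1%:M by rewrite mulmxA -SgP.
  by case: (mulmx1_unit PSsB).
have SsP : Ss = invmx P *m Sg by rewrite SgP mulKmx.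
have HgP : Hg = Hs *m invmx P.
  by rewrite -[Hg]mulmx1 -SgB mulmxA HS SsP -!mulmxA SgB mulmx1.
by exists (invmx P); rewrite ?unitmx_inv // invmxK HgP mulmxKV.
Qed.

Lemma det_gram_mul m n (A : 'M[F]_m) (S : 'M_(m, n)) :
  \det (A *m S *m (A *m S)^T) = \det A ^+ 2 * \det (S *m S^T).
Proof. by rewrite trmx_mul !mulmxA -(mulmxA A S) !det_mulmx det_tr; ring. Qed.

Lemma signed_perm_of_rows n (A : 'M[F]_n) : A \in unitmx ->
  (forall i, exists k, (A i k = 1 \/ A i k = -1) /\ forall j, j != k -> A i j = 0) ->
  exists (s : 'S_n) (d : 'I_n -> F),
    (forall i, d i = 1 \/ d i = -1) /\ A = diag_mx (\row_i d i) *m perm_mx s.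
Proof.
move=> A_unit /fin_all_exists[f fP].
have Af i j : A i j = A i (f i) * (f i == j)%:R.
  have [<-|fij] := eqVneq (f i) j; first by rewrite mulr1.
  by rewrite (proj2 (fP i)) 1?eq_sym // mulr0.
have d_neq0 i : A i (f i) != 0 by case: (proj1 (fP i)) => ->; rewrite ?oppr_eq0 oner_eq0.
have f_inj : injective f.
  move=> i i' fii'; apply/eqP/contraT => ii'.
  have AAV j j' : (A *m invmx A) j j' = A j (f j) * invmx A (f j) j'.
    rewrite mxE (bigD1 (f j)) //= big1 ?addr0 // => k fjk.
    by rewrite Af eq_sym (negbTE fjk) mulr0 mul0r.
  have := AAV i' i; rewrite mulmxV // mxE eq_sym (negbTE ii') => /esym/eqP.
  rewrite mulf_eq0 (negbTE (d_neq0 i')) -fii' /= => /eqP AVi.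
  by have := AAV i i; rewrite mulmxV // mxE eqxx AVi mulr0 => /eqP; rewrite oner_eq0.
exists (perm f_inj), (fun i => A i (f i)); split; first by move=> i; case: (fP i).
by apply/matrixP => i j; rewrite mul_diag_mx !mxE permE Af.
Qed.

Lemma invmx_signed_perm n (s : 'S_n) (d : 'I_n -> F) :
  (forall i, d i = 1 \/ d i = -1) ->
  invmx (diag_mx (\row_i d i) *m perm_mx s) = (perm_mx s)^T *m diag_mx (\row_i d i).
Proof.
move=> d_sign; set D := diag_mx _.
have DD : D *m D = 1%:M.
  apply/matrixP => i j; rewrite mul_diag_mx !mxE.
  case: eqVneq => [->|_]; rewrite ?mulr0 //.
  by case: (d_sign j) => ->; rewrite ?mulrNN mulr1.
have E : D *m perm_mx s *m ((perm_mx s)^T *m D) = 1%:M.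
  by rewrite mulmxA -(mulmxA D) tr_perm_mx -perm_mxM mulgV perm_mx1 mulmx1 DD.
have [M_unit _] := mulmx1_unit E.
by rewrite -[RHS]mul1mx -(mulVmx M_unit) -mulmxA E mulmx1.
Qed.
End Factorizations.

Section Euclidean.
Variable R : realType.

Lemma dotvE n (x y : 'cV[R]_n) : dotv x y = (x^T *m y) 0 0.
Proof. by rewrite mxE; apply: eq_bigr => i _; rewrite mxE. Qed.

Lemma dotvZl n t (x y : 'cV[R]_n) : dotv (t *: x) y = t * dotv x y.
Proof. by rewrite /dotv mulr_sumr; apply: eq_bigr => i _; rewrite mxE mulrA. Qed.

Lemma dotvC n (x y : 'cV[R]_n) : dotv x y = dotv y x.
Proof. by apply: eq_bigr => i _; rewrite mulrC. Qed.

Lemma sqnormE n (x : 'cV[R]_n) : sqnorm x = \sum_i x i 0 ^+ 2.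
Proof. by apply: eq_bigr => i _; rewrite expr2. Qed.

Lemma sqnorm_ge0 n (x : 'cV[R]_n) : 0 <= sqnorm x.
Proof. by rewrite sqnormE sumr_ge0 // => i _; rewrite sqr_ge0. Qed.

Lemma sqnormZ n t (x : 'cV[R]_n) : sqnorm (t *: x) = t ^+ 2 * sqnorm x.
Proof. by rewrite !sqnormE mulr_sumr; apply: eq_bigr => i _; rewrite mxE exprMn. Qed.

Lemma sqnormN n (x : 'cV[R]_n) : sqnorm (- x) = sqnorm x.
Proof. by rewrite -scaleN1r sqnormZ sqrrN expr1n mul1r. Qed.

Lemma sqnorm_delta n (i : 'I_n) : sqnorm (delta_mx i 0 : 'cV[R]_n) = 1.
Proof.
rewrite sqnormE (bigD1 i) //= big1 => [|j ji]; last by rewrite mxE (negbTE ji) expr0n.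
by rewrite mxE !eqxx expr1n addr0.
Qed.

Lemma dotv_row m n (A : 'M[R]_(m, n)) i y : dotv (row i A)^T y = (A *m y) i 0.
Proof. by rewrite mxE; apply: eq_bigr => j _; rewrite !mxE. Qed.

Lemma sqnorm_row m n (A : 'M[R]_(m, n)) i : sqnorm (row i A)^T = \sum_j A i j ^+ 2.
Proof. by rewrite sqnormE; apply: eq_bigr => j _; rewrite !mxE. Qed.

Lemma dotv_le_sqnorm n (x y : 'cV[R]_n) : 2 * dotv x y <= sqnorm x + sqnorm y.
Proof.
rewrite mulr_sumr -big_split /=; apply: ler_sum => i _.
by have := sqr_ge0 (x i 0 - y i 0); rewrite sqrrB; lra.
Qed.

Lemma ball_sub_Binf n (u : 'cV[R]_n) : sqnorm u <= 1 -> Binf u.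
Proof.
move=> u_le1 i; rewrite -(expr_le1 (n := 2)) // real_normK ?num_real //.
apply: le_trans u_le1; rewrite sqnormE (bigD1 i) //= lerDl.
by rewrite sumr_ge0 // => j _; rewrite sqr_ge0.
Qed.

Lemma dual_ball_bound n (a : 'cV[R]_n) :
  (forall u, sqnorm u <= 1 -> dotv a u <= 1) -> sqnorm a <= 1.
Proof.
move=> a_dual; set s := sqnorm a; have s_ge0 : 0 <= s := sqnorm_ge0 a.
have s1_gt0 : 0 < 1 + s by lra.
(* By AM-GM, [2 / (1 + s) *: a] lies in the ball; its product with [a] is
   [2 s / (1 + s)], which exceeds 1 when s > 1. *)
have := a_dual ((2 / (1 + s)) *: a).
rewrite sqnormZ dotvC dotvZl -/s -[dotv a a]/s => /(_ _)/wrap[].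
  rewrite -subr_ge0 (_ : 1 - _ = ((1 - s) / (1 + s)) ^+ 2) ?sqr_ge0 //.
  by field; rewrite gt_eqF.
rewrite mulrAC ler_pdivrMr // mul1r; lra.
Qed.

Lemma ellipsoid_Binf_bound n (C : 'M[R]_n) g :
  Defs.subset (ellipsoid C g) (@Binf R n) ->
  forall u, sqnorm u <= 1 -> forall i, (C *m u) i 0 + `|g i 0| <= 1.
Proof.
move=> CgB u u_le1 i.
have inB v : sqnorm v <= 1 -> `|(C *m v) i 0 + g i 0| <= 1.
  by move=> v_le1; have := CgB _ (ex_intro _ v (conj v_le1 erefl)) i; rewrite mxE.
have := inB _ u_le1; have := inB (- u); rewrite sqnormN mulmxN mxE => /(_ u_le1).
by rewrite !ler_norml; case: ger0P => _ /andP[? ?] /andP[? ?]; lra.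
Qed.

Lemma MVIE_Binf n (C : 'M[R]_n) g : is_MVIE (@Binf R n) C g -> C = 1%:M /\ g = 0.
Proof.
move=> [[Csym Cpsd] [CgB Cmax]].
have Cqform (x : 'cV_n) : 0 <= (x^T *m C *m x) 0 0 by rewrite -mulmxA -dotvE.
have detC_ge1 : 1 <= \det C.
  rewrite -(det1 _ n); apply: (Cmax _ 0).
    by split=> [|u]; rewrite ?trmx1 // mul1mx sqnorm_ge0.
  by move=> _ [u [u_le1 ->]]; rewrite mul1mx addr0; apply: ball_sub_Binf.
have bound := ellipsoid_Binf_bound CgB.
have Cii_bound i : C i i + `|g i 0| <= 1.
  have := bound (delta_mx i 0); rewrite sqnorm_delta lexx -colE.
  by move=> /(_ isT i); rewrite mxE.
have Cii i : C i i = 1.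
  apply: (prodr_ge1_eq1 (F := fun i => C i i)) i => [i|].
    by rewrite psd_diag_ge0 //=; have := Cii_bound i; have := normr_ge0 (g i 0); lra.
  by case/andP: (hadamard Csym Cqform) => _; apply: le_trans.
have g0 i : g i 0 = 0.
  by apply/eqP; rewrite -normr_le0; have := Cii_bound i; rewrite Cii; lra.
have Crow i : \sum_j C i j ^+ 2 <= 1.
  rewrite -sqnorm_row; apply: dual_ball_bound => u /bound /(_ i).
  by rewrite dotv_row; have := normr_ge0 (g i 0); lra.
split; last by apply/matrixP => i j; rewrite (ord1 j) g0 mxE.
apply/matrixP => i j; rewrite mxE; have [<-|ij] := eqVneq i j; first exact: Cii.
by rewrite (sqr_sum_le1_eq0 (k := i) _ (Crow i)) 1?eq_sym // Cii expr1n.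
Qed.

Lemma bd_polar_ball n (x : 'cV[R]_n) :
  sqnorm x = 1 -> bd (polar (ellipsoid 1%:M 0) 0) x.
Proof.
move=> x1 e e_gt0; have x_ball : ellipsoid 1%:M 0 x.
  by exists x; rewrite x1 mul1mx addr0.
split.
  exists x; split; last by rewrite subrr -(scale0r x) sqnormZ expr0n mul0r exprn_gt0.
  move=> _ [u [u_le1 ->]]; rewrite mul1mx !subr0 addr0.
  by have := dotv_le_sqnorm x u; lra.
exists ((1 + e / 2) *: x); split.
  by move=> /(_ x x_ball); rewrite subr0 dotvZl -[dotv x x]/(sqnorm x) x1; lra.
rewrite -{2}[x]scale1r -scalerBl addrC addKr sqnormZ x1 mulr1.
by rewrite !expr2; nra.
Qed.

Lemma polar_Binf_l1 n (x : 'cV[R]_n) : polar (@Binf R n) 0 x -> \sum_i `|x i 0| <= 1.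
Proof.
move=> /(_ (\col_i Num.sg (x i 0))); rewrite subr0 => /(_ _)/wrap[].
  by move=> i; rewrite mxE normr_sg lern1 leq_b1.
by rewrite /dotv; under eq_bigr do rewrite mxE mulrC -normrEsg.
Qed.

Lemma conv_mulmx n N (S : 'M[R]_(n, N)) y : conv S y ->
  exists l : 'cV_N, [/\ forall j, 0 <= l j 0, \sum_j l j 0 = 1 & y = S *m l].
Proof.
case=> lam [lam_ge0 [lam1 ->]]; exists (\col_j lam j); split=> [j||].
- by rewrite mxE.
- by under eq_bigr do rewrite mxE.
apply/matrixP => i k; rewrite summxE mxE.
by apply: eq_bigr => j _; rewrite !mxE mulrC.
Qed.

Lemma polar_conv_row n N (A : 'M[R]_n) (S : 'M_(n, N)) i :
  (forall j, Binf (col j (A *m S))) -> polar (conv S) 0 (row i A)^T.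
Proof.
move=> ASB y /conv_mulmx[l [l_ge0 l1 ->]]; rewrite subr0 dotv_row mulmxA mxE -l1.
apply: ler_sum => j _; rewrite ler_piMl //.
by have := ASB j i; rewrite mxE ler_norml => /andP[].
Qed.

Lemma row_free_ball_sub_conv n N (S : 'M[R]_(n, N)) :
  (forall u, sqnorm u <= 1 -> conv S u) -> row_free S.
Proof.
move=> ball_conv; have /fin_all_exists[l Sl] k : exists l : 'cV_N, delta_mx k 0 = S *m l.
  have /conv_mulmx[l [_ _ ->]] : conv S (delta_mx k 0).
    by apply: ball_conv; rewrite sqnorm_delta.
  by exists l.
apply/row_freeP; exists (\matrix_(j, k) l k j 0); apply/matrixP => i k.
move/matrixP: (Sl k) => /(_ i 0); rewrite !mxE andbT => ->.
by apply: eq_bigr => j _; rewrite mxE.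
Qed.

Lemma sqnorm_rows_eq1 n (A : 'M[R]_n) :
  (forall i, sqnorm (row i A)^T <= 1) -> 1 <= \det A ^+ 2 ->
  forall i, sqnorm (row i A)^T = 1.
Proof.
move=> rows_le1 detA_ge1.
apply: (prodr_ge1_eq1 (F := fun i => sqnorm (row i A)^T)) => [i|].
  by rewrite sqnorm_ge0 rows_le1.
have /andP[_] := hadamard (gram_sym A) (gram_psd A).
rewrite det_mulmx det_tr -expr2 => /(le_trans detA_ge1).
by under eq_bigr do rewrite gram_diag -sqnorm_row.
Qed.

Lemma signed_unit_rows n N (S : 'M[R]_(n, N)) (A : 'M_n) :
  (forall u, sqnorm u <= 1 -> conv S u) ->
  (forall x, polar (conv S) 0 x /\ bd (polar (ellipsoid 1%:M 0) 0) x ->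
     ext (polar (@Binf R n) 0) x) ->
  (forall j, Binf (col j (A *m S))) -> 1 <= \det A ^+ 2 ->
  forall i, exists k, (A i k = 1 \/ A i k = -1) /\ forall j, j != k -> A i j = 0.
Proof.
move=> ball_conv polar_ext AS_B detA_ge1.
have rows_polar i := polar_conv_row i AS_B.
have rows_le1 i : sqnorm (row i A)^T <= 1.
  by apply: dual_ball_bound => u /ball_conv /(rows_polar i); rewrite subr0.
have rows_eq1 := sqnorm_rows_eq1 rows_le1 detA_ge1.
move=> i; have [/polar_Binf_l1 row_l1 _] :=
  polar_ext _ (conj (rows_polar i) (bd_polar_ball (rows_eq1 i))).
apply: signed_unit_l1; last by rewrite -sqnorm_row.
by move: row_l1; under eq_bigr do rewrite !mxE.
Qed.
End Euclidean.

Theorem theorem2 (R : realType) (r M N : nat)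
  (Hg : 'M[R]_(M, r)) (Sg : 'M[R]_(r, N)) :
  (0 < r)%N -> (r <= M)%N -> (r <= N)%N ->
  \rank Hg = r ->
  (forall j, Binf (col j Sg)) ->
  suff_scattered Sg (@Binf R r) ->
  forall (Hs : 'M[R]_(M, r)) (Ss : 'M[R]_(r, N)),
    (* (Hs, Ss) is a global optimum of the Det-Max problem *)
    (Hg *m Sg = Hs *m Ss /\ (forall j, Binf (col j Ss)) /\
     forall (H : 'M[R]_(M, r)) (S : 'M[R]_(r, N)),
       Hg *m Sg = H *m S -> (forall j, Binf (col j S)) ->
       \det (S *m S^T) <= \det (Ss *m Ss^T)) ->
    exists (s : 'S_r) (d : 'I_r -> R),
      (forall i, d i = 1 \/ d i = -1) /\
      Hs = Hg *m (perm_mx s)^T *m diag_mx (\row_i d i) /\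
      Ss = diag_mx (\row_i d i) *m perm_mx s *m Sg.
Proof.
move=> _ _ _ rkHg SgB [C [g [MVIE [_ [ball_Sg scattered]]]]] Hs Ss [HS [SsB Ss_opt]].
have [C1 g0] := MVIE_Binf MVIE; subst C g.
have ball_conv u : sqnorm u <= 1 -> conv Sg u.
  by move=> u_le1; apply: ball_Sg; exists u; rewrite mul1mx addr0.
have Sg_free := row_free_ball_sub_conv ball_conv.
have Hg_full : row_full Hg by rewrite /row_full rkHg.
have [A A_unit [SsA HsA]] := factorization_unitmx Hg_full Sg_free HS.
have detA_ge1 : 1 <= \det A ^+ 2.
  have := Ss_opt _ _ erefl SgB; rewrite SsA det_gram_mul -{1}[\det (Sg *m _)]mul1r.
  by rewrite ler_pM2r // det_gram_gt0.
have AS_B j : Binf (col j (A *m Sg)) by rewrite -SsA.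
have := signed_unit_rows ball_conv (fun x => (scattered x).1) AS_B detA_ge1.
move=> /(signed_perm_of_rows A_unit)[s [d [d_sign Asd]]].
exists s, d; split => //.
by rewrite HsA SsA Asd invmx_signed_perm // mulmxA.
Qed.
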